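(* Let $(T_1,T_2,T_3)$ be an associative Clifford extension over $(V,S^0,S^1)$ with $\dim V>1$ and $\dim S^0\ge4$. Then there exist pairwise orthogonal nonzero vectors $e_1,e_2,e_3,e_4\in S^0$ such that $e_1(e_2t)=e_3(e_4t)$ for all $t\in T_2$, i.e. the elements $e_1e_2,e_3e_4\in\mathrm{Cl}(S^0)$ act identically on $T_2$.
   Context: All spaces are finite-dimensional real Euclidean. For a Euclidean space $X$, $\mathrm{Cl}(X)$ is the Clifford algebra with $x\cdot x=-|x|^2$; a ''$\mathrm{Cl}(X)$-module $Y\oplus Z$'' is a $\mathbb Z/2$-graded module with $X\cdot Y\subset Z$, $X\cdot Z\subset Y$, $Y\perp Z$, each $x\in X$ acting skew-symmetrically; the action is written $xy$. Let $V\neq0$ be Euclidean and $S^0\oplus S^1$ a nonzero $\mathrm{Cl}(V)$-module. A Clifford extension over $(V,S^0,S^1)$ is a triple of Euclidean spaces $T_1,T_2,T_3$ of equal dimension together with a $\mathrm{Cl}(V)$-module structure on $T_2\oplus T_3$, a $\mathrm{Cl}(S^0)$-module structure on $T_1\oplus T_2$, and a $\mathrm{Cl}(S^1)$-module structure on $T_1\oplus T_3$. It is associative if $(vs^0)t_1=v(s^0t_1)$ for all $v\in V,s^0\in S^0,t_1\in T_1$. *)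

(* Euclidean spaces of dimension n are modelled as 'rV[R]_n
   with the standard inner product, R : realType (the real numbers). *)
From HB Require Import structures.
From mathcomp Require Import all_boot all_order all_algebra.
From mathcomp Require Import reals.
Set Implicit Arguments. Unset Strict Implicit. Unset Printing Implicit Defensive.
Import Order.TTheory GRing.Theory Num.Theory.
Local Open Scope ring_scope.

Definition dotv (R : realType) (n : nat) (u v : 'rV[R]_n) : R :=
  \sum_(i < n) u ord0 i * v ord0 i.

(* A Z/2-graded Cl(X)-module Y (+) Z, with X = R^n, Y = R^p, Z = R^q
   (Y and Z orthogonal summands), given by the actions
   ayz : X -> Y -> Z  and  azy : X -> Z -> Y  (x y and x z).
   Conditions: the action is linear in x (restriction of an algebra map
   Cl(X) -> End(Y (+) Z) to X) and in the module element; each x acts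
   skew-symmetrically on Y (+) Z; and x.x = -|x|^2. *)
Definition is_cl_module (R : realType) (n p q : nat)
  (ayz : 'rV[R]_n -> 'rV[R]_p -> 'rV[R]_q)
  (azy : 'rV[R]_n -> 'rV[R]_q -> 'rV[R]_p) : Prop :=
  [/\ (forall (a : R) x x' y, ayz (a *: x + x') y = a *: ayz x y + ayz x' y),
      (forall (a : R) x x' z, azy (a *: x + x') z = a *: azy x z + azy x' z),
      (forall x (a : R) y y', ayz x (a *: y + y') = a *: ayz x y + ayz x y'),
      (forall x (a : R) z z', azy x (a *: z + z') = a *: azy x z + azy x z') &
      (forall x y z, dotv (ayz x y) z = - dotv y (azy x z))] /\
  [/\
      (forall x y, azy x (ayz x y) = - (dotv x x) *: y) &
      (forall x z, ayz x (azy x z) = - (dotv x x) *: z)].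

(* Choose orthonormal v1, v2 in V; the bivector J = v1 v2 is an orthogonal complex structure
   on S^0.  Associativity of the extension transports J to T_2: acting on T_2, J s equals
   s composed with the bivector v2 v1 of Cl(V).  Hence e (J e) acts on T_2 as -|e|^2 v2 v1,
   independently of e up to scale.  Taking e1 = e, e2 = J e1, e3 orthogonal to e1 and J e1
   (possible since dim S^0 >= 3) and e4 a multiple of J e3 gives the four vectors. *)
From HB Require Import structures.
From mathcomp Require Import all_boot all_order all_algebra.
From mathcomp Require Import reals.
Import Order.TTheory GRing.Theory Num.Theory.
Local Open Scope ring_scope.
Set Implicit Arguments.
Unset Strict Implicit.

Section DotProduct.
Variables (R : realType) (n : nat).
Implicit Types (u v w : 'rV[R]_n) (a : R).

Lemma dotvC u v : dotv u v = dotv v u.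
Proof. by apply: eq_bigr => i _; rewrite mulrC. Qed.

Lemma dotvDl u v w : dotv (u + v) w = dotv u w + dotv v w.
Proof. by rewrite /dotv -big_split; apply: eq_bigr => i _; rewrite mxE mulrDl. Qed.

Lemma dotvDr u v w : dotv w (u + v) = dotv w u + dotv w v.
Proof. by rewrite dotvC dotvDl !(dotvC w). Qed.

Lemma dotvZl a u v : dotv (a *: u) v = a * dotv u v.
Proof. by rewrite /dotv mulr_sumr; apply: eq_bigr => i _; rewrite mxE mulrA. Qed.

Lemma dotvZr a u v : dotv u (a *: v) = a * dotv u v.
Proof. by rewrite dotvC dotvZl dotvC. Qed.

Lemma dotvNr u v : dotv u (- v) = - dotv u v.
Proof. by rewrite -scaleN1r dotvZr mulN1r. Qed.

Lemma dotv_deltal (i : 'I_n) v : dotv (delta_mx 0 i) v = v 0 i.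
Proof.
rewrite /dotv (bigD1 i) //= big1 => [|j /negbTE ji]; last by rewrite mxE ji mul0r.
by rewrite mxE !eqxx mul1r addr0.
Qed.

Lemma dotv_delta (i j : 'I_n) :
  dotv (delta_mx 0 i) (delta_mx 0 j) = (i == j)%:R :> R.
Proof. by rewrite dotv_deltal mxE eqxx. Qed.

Lemma dotv_eq0 v : (dotv v v == 0) = (v == 0).
Proof.
rewrite /dotv psumr_eq0; last by move=> i _; rewrite -expr2 sqr_ge0.
apply/allP/eqP => [v0|-> i _]; last by rewrite mxE mulr0 eqxx.
apply/rowP => i; rewrite mxE; have := v0 i (mem_index_enum i).
by rewrite mulf_eq0 orbb => /eqP.
Qed.

Lemma dotv_inj v w : (forall u, dotv u v = dotv u w) -> v = w.
Proof. by move=> vw; apply/rowP => i; rewrite -!dotv_deltal. Qed.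

Lemma delta_neq0 (i : 'I_n) : delta_mx 0 i != 0 :> 'rV[R]_n.
Proof. by rewrite -dotv_eq0 dotv_delta eqxx oner_eq0. Qed.

Lemma exists_orthogonal2 u v : (2 < n)%N ->
  exists2 w, w != 0 & dotv u w = 0 /\ dotv v w = 0.
Proof.
move=> n_gt2; pose A := row_mx u^T v^T.
have : kermx A != 0.
  rewrite -mxrank_eq0 mxrank_ker -lt0n subn_gt0.
  by apply: leq_ltn_trans (rank_leq_col A) n_gt2.
case/rowV0Pn => w /sub_kermxP wA w_neq0; exists w => //.
move: wA; rewrite mul_mx_row -row_mx0 => /eq_row_mx[wu wv].
have dotvE x : dotv x w = (w *m x^T) 0 0.
  by rewrite mxE; apply: eq_bigr => k _; rewrite !mxE mulrC.
by rewrite !dotvE wu wv mxE.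
Qed.

End DotProduct.

Definition bivector (R : realType) (n p q : nat)
    (ayz : 'rV[R]_n -> 'rV[R]_p -> 'rV[R]_q) (azy : 'rV[R]_n -> 'rV[R]_q -> 'rV[R]_p)
    (x1 x2 : 'rV[R]_n) (y : 'rV[R]_p) : 'rV[R]_p :=
  azy x1 (ayz x2 y).

Section CliffordModule.
Variables (R : realType) (n p q : nat).
Variables (ayz : 'rV[R]_n -> 'rV[R]_p -> 'rV[R]_q)
          (azy : 'rV[R]_n -> 'rV[R]_q -> 'rV[R]_p).
Hypothesis clM : is_cl_module ayz azy.
Implicit Types (a : R) (x : 'rV[R]_n) (y : 'rV[R]_p) (z : 'rV[R]_q).

Lemma cl_module_sym : is_cl_module azy ayz.
Proof.
case: clM => -[? ? ? ? adj] [? ?]; split; split => // x z y.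
by rewrite dotvC -[dotv y _]opprK -adj dotvC.
Qed.

Lemma cl_act0l y : ayz 0 y = 0.
Proof.
case: clM => -[linl _ _ _ _] _.
by have := linl (-1) 0 0 y; rewrite !scaleN1r !addNr.
Qed.

Lemma cl_actDl x x' y : ayz (x + x') y = ayz x y + ayz x' y.
Proof.
case: clM => -[linl _ _ _ _] _.
by have := linl 1 x x' y; rewrite !scale1r.
Qed.

Lemma cl_actZl a x y : ayz (a *: x) y = a *: ayz x y.
Proof.
case: clM => -[linl _ _ _ _] _.
by have := linl a x 0 y; rewrite !addr0 cl_act0l addr0.
Qed.

Lemma cl_act0r x : ayz x 0 = 0.
Proof.
case: clM => -[_ _ linr _ _] _.
by have := linr x (-1) 0 0; rewrite !scaleN1r !addNr.
Qed.

Lemma cl_actDr x y y' : ayz x (y + y') = ayz x y + ayz x y'.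
Proof.
case: clM => -[_ _ linr _ _] _.
by have := linr x 1 y y'; rewrite !scale1r.
Qed.

Lemma cl_actZr a x y : ayz x (a *: y) = a *: ayz x y.
Proof.
case: clM => -[_ _ linr _ _] _.
by have := linr x a y 0; rewrite !addr0 cl_act0r addr0.
Qed.

Lemma cl_act_adj x y z : dotv (ayz x y) z = - dotv y (azy x z).
Proof. by case: clM => -[]. Qed.

Lemma cl_act_sq x y : azy x (ayz x y) = - dotv x x *: y.
Proof. by case: clM => _ []. Qed.

End CliffordModule.

Section CliffordRelations.
Variables (R : realType) (n p q : nat).
Variables (ayz : 'rV[R]_n -> 'rV[R]_p -> 'rV[R]_q)
          (azy : 'rV[R]_n -> 'rV[R]_q -> 'rV[R]_p).
Hypothesis clM : is_cl_module ayz azy.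
Let clM' := cl_module_sym clM.
Local Notation J := (bivector ayz azy).
Implicit Types (x : 'rV[R]_n) (y : 'rV[R]_p).

Lemma bivector_anticomm x1 x2 y : dotv x1 x2 = 0 -> J x1 x2 y = - J x2 x1 y.
Proof.
move=> x12; have := cl_act_sq clM (x1 + x2) y.
have -> : dotv (x1 + x2) (x1 + x2) = dotv x1 x1 + dotv x2 x2.
  by rewrite dotvDl !dotvDr x12 (dotvC x2) x12 addr0 add0r.
rewrite (cl_actDl clM) (cl_actDl clM') !(cl_actDr clM') !(cl_act_sq clM).
rewrite [- _ *: y + _]addrC addrACA opprD scalerDl !scaleNr -[RHS]add0r.
by move=> /addIr /eqP; rewrite addr_eq0 => /eqP.
Qed.

Lemma bivector_adj x1 x2 y y' : dotv (J x1 x2 y) y' = dotv y (J x2 x1 y').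
Proof. by rewrite /bivector (cl_act_adj clM') (cl_act_adj clM) opprK. Qed.

Lemma bivector_skew x1 x2 y y' :
  dotv x1 x2 = 0 -> dotv (J x1 x2 y) y' = - dotv y (J x1 x2 y').
Proof. by move=> x12; rewrite bivector_adj bivector_anticomm ?dotvNr // dotvC. Qed.

Lemma bivector_sq x1 x2 y :
  dotv x1 x2 = 0 -> J x1 x2 (J x1 x2 y) = - (dotv x1 x1 * dotv x2 x2) *: y.
Proof.
move=> x12; rewrite bivector_anticomm // /bivector (cl_act_sq clM') (cl_actZr clM').
by rewrite (cl_act_sq clM) scalerA mulrN mulNr opprK scaleNr.
Qed.

Lemma bivector_dot x1 x2 y y' : dotv x1 x2 = 0 ->
  dotv (J x1 x2 y) (J x1 x2 y') = dotv x1 x1 * dotv x2 x2 * dotv y y'.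
Proof. by move=> x12; rewrite bivector_skew // bivector_sq // dotvZr mulNr opprK. Qed.

Lemma bivector_perp x1 x2 y : dotv x1 x2 = 0 -> dotv y (J x1 x2 y) = 0.
Proof.
move=> x12; have /eqP := bivector_skew y y x12.
by rewrite dotvC -addr_eq0 -mulr2n mulrn_eq0 => /eqP.
Qed.

End CliffordRelations.

Section CliffordExtension.
Variables (R : realType) (nV n0 n1 m : nat).
Variables (vS0 : 'rV[R]_nV -> 'rV[R]_n0 -> 'rV[R]_n1)
          (vS1 : 'rV[R]_nV -> 'rV[R]_n1 -> 'rV[R]_n0)
          (vT2 : 'rV[R]_nV -> 'rV[R]_m -> 'rV[R]_m)
          (vT3 : 'rV[R]_nV -> 'rV[R]_m -> 'rV[R]_m)
          (sT1 : 'rV[R]_n0 -> 'rV[R]_m -> 'rV[R]_m)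
          (sT2 : 'rV[R]_n0 -> 'rV[R]_m -> 'rV[R]_m)
          (uT1 : 'rV[R]_n1 -> 'rV[R]_m -> 'rV[R]_m)
          (uT3 : 'rV[R]_n1 -> 'rV[R]_m -> 'rV[R]_m).
Hypotheses (clS : is_cl_module vS0 vS1) (clT : is_cl_module vT2 vT3)
           (cl0 : is_cl_module sT1 sT2) (cl1 : is_cl_module uT1 uT3).
Hypothesis assoc : forall v s t, uT1 (vS0 v s) t = vT2 v (sT1 s t).
Variables (v1 v2 : 'rV[R]_nV).
Hypothesis v1_neq0 : v1 != 0.
Local Notation J := (bivector vS0 vS1 v1 v2).

Lemma ext_bivector_act s t : sT1 (J s) t = bivector vT2 vT3 v1 v2 (sT1 s t).
Proof.
have v1_sq_neq0 : - dotv v1 v1 != 0 by rewrite oppr_eq0 dotv_eq0.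
have := assoc v1 (J s) t.
rewrite /bivector (cl_act_sq (cl_module_sym clS)) (cl_actZl cl1) assoc.
move=> /(congr1 (vT3 v1)).
by rewrite (cl_actZr (cl_module_sym clT)) (cl_act_sq clT) => /(scalerI v1_sq_neq0).
Qed.

Lemma ext_bivector_transport s t :
  sT2 (J s) t = sT2 s (bivector vT2 vT3 v2 v1 t).
Proof.
apply: dotv_inj => t1; rewrite -[LHS]opprK -(cl_act_adj cl0).
by rewrite ext_bivector_act (bivector_adj clT) (cl_act_adj cl0) opprK.
Qed.

Lemma ext_pair_act e t :
  sT1 e (sT2 (J e) t) = - dotv e e *: bivector vT2 vT3 v2 v1 t.
Proof. by rewrite ext_bivector_transport (cl_act_sq (cl_module_sym cl0)). Qed.

End CliffordExtension.

Theorem mainTheorem8 (R : realType) (nV n0 n1 m : nat)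
  (vS0 : 'rV[R]_nV -> 'rV[R]_n0 -> 'rV[R]_n1)
  (vS1 : 'rV[R]_nV -> 'rV[R]_n1 -> 'rV[R]_n0)
  (vT2 : 'rV[R]_nV -> 'rV[R]_m -> 'rV[R]_m)
  (vT3 : 'rV[R]_nV -> 'rV[R]_m -> 'rV[R]_m)
  (sT1 : 'rV[R]_n0 -> 'rV[R]_m -> 'rV[R]_m)
  (sT2 : 'rV[R]_n0 -> 'rV[R]_m -> 'rV[R]_m)
  (uT1 : 'rV[R]_n1 -> 'rV[R]_m -> 'rV[R]_m)
  (uT3 : 'rV[R]_n1 -> 'rV[R]_m -> 'rV[R]_m) :
  (0 < n0 + n1)%N ->
  is_cl_module vS0 vS1 ->
  is_cl_module vT2 vT3 ->
  is_cl_module sT1 sT2 ->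
  is_cl_module uT1 uT3 ->
  (forall v s t, uT1 (vS0 v s) t = vT2 v (sT1 s t)) ->
  (1 < nV)%N -> (4 <= n0)%N ->
  exists e1 e2 e3 e4 : 'rV[R]_n0,
    [/\ e1 != 0, e2 != 0, e3 != 0 & e4 != 0] /\
    [/\ dotv e1 e2 = 0, dotv e1 e3 = 0 & dotv e1 e4 = 0] /\
    [/\ dotv e2 e3 = 0, dotv e2 e4 = 0 & dotv e3 e4 = 0] /\
    (forall t : 'rV[R]_m, sT1 e1 (sT2 e2 t) = sT1 e3 (sT2 e4 t)).
Proof.
move=> _ clS clT cl0 cl1 assoc nV_gt1 n0_ge4.
pose v1 : 'rV[R]_nV := delta_mx 0 (Ordinal (ltnW nV_gt1)).
pose v2 : 'rV[R]_nV := delta_mx 0 (Ordinal nV_gt1).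
have v12 : dotv v1 v2 = 0 by rewrite dotv_delta.
pose J := bivector vS0 vS1 v1 v2.
have J_dot a b : dotv (J a) (J b) = dotv a b.
  by rewrite (bivector_dot clS) // !dotv_delta !eqxx !mul1r.
have J_neq0 e : e != 0 -> J e != 0 by rewrite -!dotv_eq0 J_dot.
have pair_act := ext_pair_act clS clT cl0 cl1 assoc v2 (delta_neq0 _ _ : v1 != 0).
pose e1 : 'rV[R]_n0 := delta_mx 0 (Ordinal (leq_trans (isT : 0 < 4)%N n0_ge4)).
have e1_neq0 : e1 != 0 by apply: delta_neq0.
have [e3 e3_neq0 [e13 e23]] :=
  exists_orthogonal2 e1 (J e1) (leq_trans (isT : 2 < 4)%N n0_ge4).
have e33_neq0 : dotv e3 e3 != 0 by rewrite dotv_eq0.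
pose c := dotv e1 e1 / dotv e3 e3.
have c_neq0 : c != 0 by rewrite mulf_neq0 ?invr_eq0 ?dotv_eq0.
exists e1, (J e1), e3, (c *: J e3); split; [|split; [|split]].
- by split; rewrite ?scaler_eq0 ?negb_or ?c_neq0 ?J_neq0.
- split=> //; first exact: bivector_perp.
  by rewrite dotvZr -[dotv e1 _]opprK -(bivector_skew clS) // e23 oppr0 mulr0.
- split=> //; first by rewrite dotvZr J_dot e13 mulr0.
  by rewrite dotvZr (bivector_perp clS) // mulr0.
move=> t; rewrite (cl_actZl (cl_module_sym cl0)) (cl_actZr cl0) !pair_act.
by rewrite scalerA mulrN divfK.
Qed.
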